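(* For every integer $c \ge 4$ and every $n \ge 3$, there is no wait-free algorithm for the $c$-cycle agreement problem among $n$ processes in the non-uniform iterated immediate snapshot (NIIS) model.
   Context: Graphical approximate agreement on a connected undirected graph $G=(V,E)$ (known to all processes): each process $p_i$ receives an input vertex $x_i \in V$ and each process that does not crash must output a vertex $y_i \in V$ such that (agreement) any two output vertices are equal or adjacent in $G$, and (validity) every output vertex lies on some shortest path in $G$ between two (not necessarily distinct) input vertices. The $c$-cycle agreement problem is graphical approximate agreement on the cycle graph with vertices $0,1,\dots,c-1$ and edges $\{a,a+1 \bmod c\}$; every vertex is a possible input. NIIS model: processes $p_0,\dots,p_{n-1}$ communicate through an infinite sequence $S_1,S_2,\dots$ of single-writer atomic snapshot objects, each with $n$ components initially $-$; $\mathsf{update}(x)$ by $p_i$ sets component $i$ to $x$, and $\mathsf{scan}$ returns all components atomically. Initially the state of $p_i$ is its identifier and its input. The scheduler repeatedly selects a nonempty set of processes all poised to access the same snapshot object $S_r$; each of them performs $\mathsf{update}$ of its own component of $S_r$ with its current state, and then each of them performs one $\mathsf{scan}$ of $S_r$; its new state is its identifier together with the scan result. A deterministic function $\Delta$ of the state decides, after each scan, whether the process outputs a value (and terminates) or continues with the next snapshot object. An algorithm is wait-free if there is no infinite schedule from any initial configuration. *)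

From Stdlib Require Import Relations.
From mathcomp Require Import all_boot.

Set Implicit Arguments.
Unset Strict Implicit.
Unset Printing Implicit Defensive.

Definition cycle_adj (c : nat) (a b : 'I_c) : bool :=
  (val b == (val a).+1 %% c) || (val a == (val b).+1 %% c).

Definition cycle_walk (c : nat) (u v : 'I_c) (p : seq 'I_c) : bool :=
  path (@cycle_adj c) u p && (last u p == v).

Definition cycle_shortest_path (c : nat) (u v : 'I_c) (p : seq 'I_c) : Prop :=
  cycle_walk u v p /\ forall q, cycle_walk u v q -> size p <= size q.

Definition on_shortest_path (c : nat) (u v y : 'I_c) : Prop :=
  exists p, cycle_shortest_path u v p /\ y \in u :: p.

(* Local state of a process: initially its identifier and its input; after   *)
(* a scan, its identifier together with the scan result (n components, each  *)
(* either "-" = None or the state written by a process).                    *)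
Inductive state (n c : nat) : Type :=
| SInit of 'I_n & 'I_c
| SView of 'I_n & ('I_n -> option (state n c)).

(* An algorithm is the deterministic decision map Delta, applied after each  *)
(* scan: Some y = output y and terminate, None = continue.                   *)
Definition algorithm (n c : nat) := state n c -> option 'I_c.

(* Status of a process: poised to access snapshot object S_r with local     *)
(* state s, or terminated with output y.                                     *)
Inductive status (n c : nat) : Type :=
| Poised of nat & state n c
| Done of 'I_c.

Record config (n c : nat) : Type := Config {
  cstatus : 'I_n -> status n c;
  cmem : nat -> 'I_n -> option (state n c)  (* contents of S_r *)
}.

Definition init_config (n c : nat) (x : 'I_n -> 'I_c) : config n c :=
  Config (fun i => Poised 1 (SInit i (x i))) (fun _ _ => None).

Definition written (n c : nat) (cfg : config n c) (P : {set 'I_n}) (r : nat)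
  : 'I_n -> option (state n c) :=
  fun j => if j \in P then
             match cstatus cfg j with
             | Poised _ s => Some s
             | Done _ => cmem cfg r j
             end
           else cmem cfg r j.

(* One scheduler step: a nonempty set P of processes, all poised on the same *)
(* S_r, each update S_r with its state, then each scans S_r; the new state  *)
Definition step (n c : nat) (Delta : algorithm n c)
  (cfg : config n c) (P : {set 'I_n}) (cfg' : config n c) : Prop :=
  P != set0 /\
  exists r : nat,
    (forall i, i \in P -> exists s, cstatus cfg i = Poised r s) /\
    let w := written cfg P r in
    cfg' = Config
      (fun j => if j \in P then
                  match Delta (SView j w) with
                  | Some y => Done n y
                  | None => Poised r.+1 (SView j w)
                  end
                else cstatus cfg j)
      (fun r' => if r' == r then w else cmem cfg r').

Definition step_any (n c : nat) (Delta : algorithm n c)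
  (cfg cfg' : config n c) : Prop :=
  exists P, step Delta cfg P cfg'.

Definition reachable (n c : nat) (Delta : algorithm n c) (x : 'I_n -> 'I_c)
  (cfg : config n c) : Prop :=
  clos_refl_trans _ (@step_any n c Delta) (init_config x) cfg.

Definition wait_free (n c : nat) (Delta : algorithm n c) : Prop :=
  forall x : 'I_n -> 'I_c,
    ~ exists (cfgs : nat -> config n c) (Ps : nat -> {set 'I_n}),
        cfgs 0 = init_config x /\
        forall k, step Delta (cfgs k) (Ps k) (cfgs k.+1).

(* The algorithm's outputs satisfy agreement and validity for the c-cycle    *)
(* agreement problem in every execution (every input vector, every finite    *)
(* schedule; crashed processes are those no longer scheduled).               *)
Definition solves_cycle_agreement (n c : nat) (Delta : algorithm n c) : Prop :=
  forall (x : 'I_n -> 'I_c) (cfg : config n c), reachable Delta x cfg ->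
    (forall i j yi yj, cstatus cfg i = Done n yi -> cstatus cfg j = Done n yj ->
        (yi == yj) || cycle_adj yi yj) /\
    (forall i y, cstatus cfg i = Done n y ->
        exists p q : 'I_n, on_shortest_path (x p) (x q) y).

From mathcomp Require Import all_boot zify.
From Stdlib Require Import Relations Wellfounded.
From Stdlib Require Import Classical ClassicalEpsilon.
From Stdlib Require Import FunctionalExtensionality PropExtensionality.

Set Implicit Arguments.
Unset Strict Implicit.
Unset Printing Implicit Defensive.

(* Only processes 0, 1, 2 are ever scheduled; the others crash initially.    *)
(* A round of the three processes is an immediate-snapshot round: an ordered *)
(* partition of the active processes into blocks, each block updating then   *)
(* scanning, so a process sees exactly the blocks up to its own.  By wait-   *)
(* freedom these rounds form a finite execution tree (the chromatic          *)
(* subdivision of the input simplex), and for a predicate w on the output    *)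
(* vectors of a set S of processes we define the parity of the terminal      *)
(* executions satisfying w.  The core combinatorial fact is a Sperner-type   *)
(* boundary formula: the parity over S equals the xor of the parities over   *)
(* the faces S \ {k}, provided the leaf predicates satisfy the same formula. *)
(* It rests on the identity that one round restricted to a face equals, mod  *)
(* 2, the rounds of that face alone (checked over all subsets of {0,1,2}).   *)
(* Count the output edges {0,1} of the cycle.  For the two processes 0 and   *)
(* p_j with inputs 0 and j, call this parity spoke j.  Agreement forces every *)
(* output triangle to contain an even number of {0,1} edges (as c >= 4), and *)
(* validity keeps the outputs of the rim j -- j+1 away from {0,1}; the       *)
(* boundary formula on the triangle 0, j, j+1 thus gives spoke j = spoke     *)
(* (j+1).  But spoke 1 = 1 by the one-dimensional formula (validity fixes    *)
(* the endpoint outputs 0 and 1), while spoke c = 0 (all inputs are 0).      *)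

Lemma clos_t_rt (T : Type) (R : relation T) x y z :
  clos_trans _ R x y -> clos_refl_trans _ R y z -> clos_trans _ R x z.
Proof.
move=> hxy hyz; elim: hyz x hxy => [y0 z0 h | y0 | y0 z0 w0 _ IH1 _ IH2] x hxy //.
- exact: t_trans hxy (t_step _ _ _ _ h).
- exact: IH2 (IH1 _ hxy).
Qed.

Lemma list_choice (T : eqType) (L : seq T) (Q : T -> bool -> Prop) :
  (forall x, x \in L -> exists b, Q x b) ->
  exists f : T -> bool, forall x, x \in L -> Q x (f x).
Proof.
elim: L => [|x L IH] h; first by exists (fun _ => false).
have [b0 hb0] := h x (mem_head _ _).
have [f hf] := IH (fun y hy => h y (@mem_behead _ (x :: L) y hy)).
exists (fun y => if y == x then b0 else f y) => y; rewrite inE.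
by case: eqP => [-> | _] //= /hf.
Qed.

Definition xorl (s : seq bool) : bool := foldr addb false s.

Lemma xorl_big (T : Type) (g : T -> bool) (L : seq T) :
  xorl (map g L) = \big[addb/false]_(x <- L) g x.
Proof. by elim: L => [|x L IH]; rewrite ?big_nil ?big_cons //= IH. Qed.

Lemma xorl_false (T : Type) (L : seq T) : xorl (map (fun _ => false) L) = false.
Proof. by elim: L. Qed.

Lemma xorl_addb (T : Type) (f g : T -> bool) (L : seq T) :
  xorl (map (fun k => f k (+) g k) L) = xorl (map f L) (+) xorl (map g L).
Proof. by elim: L => //= x L ->; rewrite addbACA. Qed.

Lemma xorl_swap (T1 T2 : Type) (g : T1 -> T2 -> bool) (L : seq T1) (S : seq T2) :
  xorl (map (fun p => xorl (map (g p) S)) L) =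
  xorl (map (fun k => xorl (map (fun p => g p k) L)) S).
Proof.
elim: L => [|p L IH] /=; first by rewrite xorl_false.
by rewrite IH xorl_addb.
Qed.

Lemma xorl_perm (T : eqType) (g : T -> bool) (L1 L2 : seq T) :
  perm_eq L1 L2 -> xorl (map g L1) = xorl (map g L2).
Proof. by move=> h; rewrite !xorl_big; apply: perm_big. Qed.

(* The elements of L occurring an odd number of times: a parity only sees    *)
(* the multiset L modulo 2.                                                  *)
Definition odd_part (T : eqType) (L : seq T) : seq T :=
  [seq v <- undup L | odd (count_mem v L)].

Lemma xorl_odd_part (T : eqType) (g : T -> bool) (L : seq T) :
  xorl (map g L) = xorl (map g (odd_part L)).
Proof.
have iterop_addb k b : iterop k addb b false = odd k && b.
  by case: k => // k; elim: k => //= k ->; case: b; case: (odd k).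
rewrite !xorl_big /odd_part big_filter -big_undup_iterop_count big_mkcond.
elim: (undup L) => [|x s IH]; rewrite ?big_nil ?big_cons //= IH iterop_addb.
by case: ifP.
Qed.

(* The ordered partitions of s, i.e. the immediate-snapshot schedules of the *)
(* processes in s: insert each element as a new block or into the first     *)
(* block of an ordered partition of the remaining elements.                  *)
Fixpoint ins_block (x : nat) (p : seq (seq nat)) : seq (seq (seq nat)) :=
  match p with
  | [::] => [:: [:: [:: x]]]
  | B :: p' => ([:: x] :: B :: p') :: ((x :: B) :: p') ::
               [seq B :: q | q <- ins_block x p']
  end.

Fixpoint ord_parts (s : seq nat) : seq (seq (seq nat)) :=
  match s with
  | [::] => [:: [::]]
  | x :: s' => flatten [seq ins_block x p | p <- ord_parts s']
  end.

Definition procs3 : seq nat := [:: 0; 1; 2].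

Lemma mem_procs3 m : (m \in procs3) = (m < 3).
Proof. by case: m => [|[|[|m]]]. Qed.

Definition covered (l : nat) (p : seq (seq nat)) : bool := has (fun B => l \in B) p.

Lemma covered_flatten l p : covered l p = (l \in flatten p).
Proof. by elim: p => [|B p IH] //=; rewrite mem_cat IH. Qed.

(* The processes seen by l in the round p: those in the blocks up to l's. *)
Definition snap_view (p : seq (seq nat)) (l : nat) : seq nat :=
  if covered l p then
    [seq m <- procs3 | covered m (take (find (fun B => l \in B) p).+1 p)]
  else [::].

Lemma snap_view_covered p l m : m \in snap_view p l -> covered m p.
Proof.
rewrite /snap_view; case: ifP => // _; rewrite mem_filter => /andP [h _].
move: h; rewrite !covered_flatten => h.
rewrite -(cat_take_drop (find (fun B => l \in B) p).+1 p).
by rewrite flatten_cat mem_cat h.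
Qed.

Lemma ins_block_perm x p q : q \in ins_block x p -> perm_eq (flatten q) (x :: flatten p).
Proof.
elim: p q => [|B p IH] q /=; first by rewrite inE => /eqP ->.
rewrite !inE => /orP [/eqP -> | /orP [/eqP -> | /mapP [q' hq' ->]]] //=.
apply: (@perm_trans _ (B ++ x :: flatten p)); first by rewrite perm_cat2l (IH _ hq').
by rewrite -(cat1s x (B ++ _)) -(cat1s x (flatten p)) perm_catCA.
Qed.

Lemma ord_parts_perm s p : p \in ord_parts s -> perm_eq (flatten p) s.
Proof.
elim: s p => [|x s IH] p /=; first by rewrite inE => /eqP ->.
case/flattenP => q /mapP [p0 hp0 ->] hp.
by apply: perm_trans (ins_block_perm hp) _; rewrite perm_cons IH.
Qed.

Lemma ord_parts_covered s p l : p \in ord_parts s -> covered l p = (l \in s).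
Proof. by move=> h; rewrite covered_flatten (perm_mem (ord_parts_perm h)). Qed.

Lemma ins_block_nonempty x p q : q \in ins_block x p ->
  all (fun B => B != [::]) p -> all (fun B => B != [::]) q.
Proof.
elim: p q => [|B p IH] q /=; first by rewrite inE => /eqP ->.
rewrite !inE => /orP [/eqP -> | /orP [/eqP -> | /mapP [q' hq' ->]]] /andP [hB h] /=;
  rewrite ?hB ?h //; exact: IH.
Qed.

Lemma ord_parts_nonempty s p : p \in ord_parts s -> all (fun B => B != [::]) p.
Proof.
elim: s p => [|x s IH] p /=; first by rewrite inE => /eqP ->.
case/flattenP => q /mapP [p0 hp0 ->] hp.
exact: ins_block_nonempty hp (IH _ hp0).
Qed.

Definition face_views (F : seq nat) (p : seq (seq nat)) : seq (seq nat) :=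
  [seq snap_view p l | l <- F].

Definition drop_proc (k : nat) (S : seq nat) : seq nat := [seq l <- S | l != k].

Definition ordered3 (S : seq nat) : Prop := S = [seq l <- procs3 | l \in S].

Lemma ordered3_all S : ordered3 S -> all (fun l => l < 3) S.
Proof. by move=> ->; apply/allP => l; rewrite mem_filter mem_procs3 => /andP []. Qed.

Lemma ordered3_uniq S : ordered3 S -> uniq S.
Proof. by move=> ->; rewrite filter_uniq. Qed.

Lemma ordered3_filter (P : pred nat) S : ordered3 S -> ordered3 [seq l <- S | P l].
Proof.
move=> hS; rewrite /ordered3 {1}hS -filter_predI; apply: eq_filter => l /=.
by rewrite mem_filter andbC.
Qed.

Definition subset3 (a0 a1 a2 : bool) : seq nat :=
  [seq l <- procs3 | nth false [:: a0; a1; a2] l].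

Lemma ordered3_subset3 S : ordered3 S -> S = subset3 (0 \in S) (1 \in S) (2 \in S).
Proof. by move=> {1}->. Qed.

(* Restriction of a round to a face: if at most one active process lies      *)
(* outside the face F, then the views of F over all rounds of the active     *)
(* processes A coincide, modulo 2, with the views over the rounds of the     *)
(* active processes of F alone.  Checked on all subsets of {0,1,2}.          *)
Lemma face_views_mod2 (A F : seq nat) (G : seq (seq nat) -> bool) :
  ordered3 A -> ordered3 F -> count (fun l => l \notin F) A <= 1 ->
  xorl [seq G (face_views F p) | p <- ord_parts A] =
  xorl [seq G (face_views F p) | p <- ord_parts [seq l <- A | l \in F]].
Proof.
move=> /ordered3_subset3 -> /ordered3_subset3 -> h.
rewrite !(map_comp G (face_views _)) [LHS]xorl_odd_part [RHS]xorl_odd_part.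
apply: xorl_perm; move: h.
by case: (0 \in A); case: (1 \in A); case: (2 \in A);
   case: (0 \in F); case: (1 \in F); case: (2 \in F); vm_compute.
Qed.

Lemma filterC (T : Type) (p1 p2 : pred T) (s : seq T) :
  [seq x <- [seq x <- s | p1 x] | p2 x] = [seq x <- [seq x <- s | p2 x] | p1 x].
Proof. by rewrite -!filter_predI; apply: eq_filter => x /=; rewrite andbC. Qed.

Section CycleGeometry.
Variable C : nat.

Lemma cycle_adjC (u v : 'I_C) : cycle_adj u v = cycle_adj v u.
Proof. by rewrite /cycle_adj orbC. Qed.

(* Validity on a degenerate input edge: the only shortest path is trivial. *)
Lemma on_shortest_path_same (u y : 'I_C) : on_shortest_path u u y -> y = u.
Proof.
move=> [p [[_ hmin] hy]]; have := hmin [::]; rewrite /cycle_walk /= eqxx => /(_ isT).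
by case: p {hmin} hy => // /[!inE] /eqP.
Qed.

(* Validity on an input edge: the only shortest path is the edge itself. *)
Lemma on_shortest_path_adj (u v y : 'I_C) :
  cycle_adj u v -> on_shortest_path u v y -> y = u \/ y = v.
Proof.
move=> huv [p [[hw hmin] hy]]; have := hmin [:: v].
rewrite /cycle_walk /= huv eqxx => /(_ isT).
case: p {hmin} hw hy => [|w [|w' p]] //= /andP [_ /eqP /= hlast].
  by rewrite inE => /eqP; left.
by rewrite -hlast !inE => /orP [] /eqP; [left | right].
Qed.

Lemma cycle_adjE (a b : 'I_C) : cycle_adj a b =
  [|| val b == val a + 1, (val a == C - 1) && (val b == 0),
      val a == val b + 1 | (val b == C - 1) && (val a == 0)].
Proof.
have succ_mod x : x < C -> x.+1 %% C = if x.+1 == C then 0 else x.+1.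
  by case: eqP => [-> | h'] h; [rewrite modnn | rewrite modn_small //; lia].
have ha : val a < C := ltn_ord a; have hb : val b < C := ltn_ord b.
rewrite /cycle_adj !succ_mod //.
by case: ((val a).+1 =P C) => h1; case: ((val b).+1 =P C) => h2; lia.
Qed.

Definition edge01 (a b : 'I_C) : bool :=
  ((val a == 0) && (val b == 1)) || ((val a == 1) && (val b == 0)).

Lemma triangle_edge01_even (y0 y1 y2 : 'I_C) : 3 < C ->
  (y0 == y1) || cycle_adj y0 y1 -> (y0 == y2) || cycle_adj y0 y2 ->
  (y1 == y2) || cycle_adj y1 y2 ->
  xorl [:: edge01 y1 y2; edge01 y0 y2; edge01 y0 y1] = false.
Proof.
have triangle_nat a b d : 3 < C -> a < C -> b < C -> d < C ->
  (a == b) || [|| b == a + 1, (a == C - 1) && (b == 0), a == b + 1 | (b == C - 1) && (a == 0)] ->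
  (a == d) || [|| d == a + 1, (a == C - 1) && (d == 0), a == d + 1 | (d == C - 1) && (a == 0)] ->
  (b == d) || [|| d == b + 1, (b == C - 1) && (d == 0), b == d + 1 | (d == C - 1) && (b == 0)] ->
  ((b == 0) && (d == 1) || (b == 1) && (d == 0)) (+) (((a == 0) && (d == 1) ||
  (a == 1) && (d == 0)) (+) (((a == 0) && (b == 1) || (a == 1) && (b == 0)) (+) false)) = false.
  by move: a b d => [|[|a]] [|[|b]] [|[|d]] *; simpl in *; lia.
rewrite !cycle_adjE /edge01 -!val_eqE /=.
by move=> hC; apply: triangle_nat; rewrite ?ltn_ord.
Qed.

End CycleGeometry.

Section CycleVertices.
Variable c : nat.
Local Notation C := c.+1.

Definition cyc (k : nat) : 'I_C := inord (k %% C).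

Lemma cycK k : val (cyc k) = k %% C.
Proof. by apply: inordK; rewrite ltn_mod. Qed.

Lemma cyc_adj j : cycle_adj (cyc j) (cyc j.+1).
Proof. by rewrite /cycle_adj !cycK -[(j %% C).+1]addn1 modnDml addn1 eqxx. Qed.

Lemma rim_not_edge01 j (y y' : 'I_C) : 3 < C -> 0 < j < C ->
  y \in [:: cyc j; cyc j.+1] -> y' \in [:: cyc j; cyc j.+1] -> edge01 y y' = false.
Proof.
move=> hC hj; rewrite !inE -!val_eqE !cycK /edge01 (modn_small (_ : j < C)); last by lia.
have -> : j.+1 %% C = if j.+1 == C then 0 else j.+1.
  by case: eqP => [-> | ?]; [rewrite modnn | rewrite modn_small; lia].
by move: (val y) (val y') => a b; case: (j.+1 =P C) => h ha hb; lia.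
Qed.

End CycleVertices.
Arguments cyc {c} k.

Section ThreeProcesses.
Variables (n c : nat).
Local Notation N := n.+3.
Local Notation C := c.+1.
Variable Delta : algorithm N C.

Inductive pstate := ADone of 'I_C | AAct of state N C.

Definition proc (l : nat) : 'I_N := inord l.

Lemma procK l : l < 3 -> val (proc l) = l.
Proof. by move=> h; apply: inordK; apply: leq_trans h _. Qed.

Definition state_of (a : pstate) : state N C :=
  if a is AAct s then s else SInit ord0 ord0.
Definition output_of (a : pstate) : 'I_C := if a is ADone y then y else ord0.
Definition is_active (a : pstate) : bool := if a is AAct _ then true else false.

Definition snapshot (st : nat -> pstate) (W : seq nat) : 'I_N -> option (state N C) :=
  fun j => if (val j < 3) && (val j \in W) then Some (state_of (st (val j))) else None.

Definition decide (j : 'I_N) (w : 'I_N -> option (state N C)) : pstate :=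
  if Delta (SView j w) is Some y then ADone y else AAct (SView j w).

Definition run_round (st : nat -> pstate) (p : seq (seq nat)) (l : nat) : pstate :=
  if covered l p then
    if st l is AAct _ then decide (proc l) (snapshot st (snap_view p l)) else st l
  else st l.

Definition active (S : seq nat) (st : nat -> pstate) : seq nat :=
  [seq l <- S | is_active (st l)].
Definition outputs (S : seq nat) (st : nat -> pstate) : seq 'I_C :=
  [seq output_of (st l) | l <- S].

(* LeafParity w S st b: the execution tree of the processes S from st is     *)
(* finite, and b is the parity of its leaves whose outputs satisfy w.        *)
Inductive LeafParity (w : seq 'I_C -> bool) (S : seq nat) :
    (nat -> pstate) -> bool -> Prop :=
| PLeaf st : active S st = [::] -> LeafParity w S st (w (outputs S st))
| PNode st (f : seq (seq nat) -> bool) : active S st != [::] ->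
    (forall p, p \in ord_parts (active S st) -> LeafParity w S (run_round st p) (f p)) ->
    LeafParity w S st (xorl (map f (ord_parts (active S st)))).

Lemma LeafParity_uniq w S st b1 b2 :
  LeafParity w S st b1 -> LeafParity w S st b2 -> b1 = b2.
Proof.
move=> h; elim: h b2 => [s0 h0 | s0 f hne hch IH] b2 h2; inversion h2; subst => //.
- by move: H; rewrite h0.
- by move: hne; rewrite H.
- by congr xorl; apply/eq_in_map => p hp; exact: IH _ hp _ (H0 _ hp).
Qed.

(* The parity as a function (meaningful when the execution tree is finite). *)
Definition parity (w : seq 'I_C -> bool) (S : seq nat) (st : nat -> pstate) : bool :=
  epsilon (inhabits false) (LeafParity w S st).

Lemma parityE w S st b : LeafParity w S st b -> parity w S st = b.
Proof.
move=> h; apply: (LeafParity_uniq _ h); apply: epsilon_spec; by exists b.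
Qed.

Lemma LeafParity_ext w S st st' b : (forall l, l \in S -> st l = st' l) ->
  LeafParity w S st b -> LeafParity w S st' b.
Proof.
move=> hS h; elim: h st' hS => [s0 h0 | s0 f hne hch IH] st' hS;
  have eA : active S st' = active S s0 by apply: eq_in_filter => l hl; rewrite hS.
- have <- : outputs S st' = outputs S s0 by apply/eq_in_map => l hl; rewrite hS.
  by apply: PLeaf; rewrite eA.
- rewrite -eA; apply: PNode; rewrite eA // => p hp; apply: IH => // l hl.
  rewrite /run_round -hS //; case: ifP => // hin; case: (s0 l) => // _.
  congr decide; apply: functional_extensionality => j.
  rewrite /snapshot; case: ifP => // /andP [_ hj]; rewrite hS //.
  by have := snap_view_covered hj; rewrite (ord_parts_covered _ hp) mem_filter => /andP [].
Qed.

Lemma parity_ext w S st st' : (forall l, l \in S -> st l = st' l) ->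
  parity w S st = parity w S st'.
Proof.
move=> hS; rewrite /parity; congr epsilon; apply: functional_extensionality => b.
by apply: propositional_extensionality; split; apply: LeafParity_ext => // l /hS.
Qed.

Definition to_status (r : nat) (a : pstate) : status N C :=
  match a with AAct s => Poised r s | ADone y => Done N y end.

Definition ready (r : nat) (st : nat -> pstate) (W : seq nat) (cfg : config N C)
    (m : nat) : Prop :=
  [/\ m < 3, m \notin W & cstatus cfg (proc m) = Poised r (state_of (st m))].

Lemma block_step r st W B (cfg : config N C) :
  B != [::] -> (forall m, m \in B -> ready r st W cfg m) ->
  cmem cfg r = snapshot st W ->
  exists cfg', step_any Delta cfg cfg' /\
    cmem cfg' r = snapshot st (W ++ B) /\
    (forall r', r' != r -> cmem cfg' r' = cmem cfg r') /\
    (forall j, cstatus cfg' j = if (val j < 3) && (val j \in B) then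
       to_status r.+1 (decide j (snapshot st (W ++ B))) else cstatus cfg j).
Proof.
move=> hB hrd hmem.
set P : {set 'I_N} := [set j : 'I_N | (val j < 3) && (val j \in B)].
have hP i : i \in P -> [/\ val i < 3, val i \in B &
                         cstatus cfg i = Poised r (state_of (st (val i)))].
  rewrite inE => /andP [hi hiB]; have [_ _ h] := hrd _ hiB.
  by split => //; rewrite -h /proc inord_val.
have hw : written cfg P r = snapshot st (W ++ B).
  apply: functional_extensionality => j; rewrite /written.
  case: ifP => hj; first by have [h3 hjB ->] := hP j hj; rewrite /snapshot h3 mem_cat hjB orbT.
  rewrite hmem /snapshot mem_cat; move: hj; rewrite inE.
  by case: (val j < 3) => //= ->; rewrite orbF.
have hP0 : P != set0.
  have hmB : nth 0 B 0 \in B by apply: mem_nth; rewrite lt0n size_eq0.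
  have [hm _ _] := hrd _ hmB.
  by apply/set0Pn; exists (proc (nth 0 B 0)); rewrite inE procK // hm hmB.
eexists; split; first by exists P; split => //; exists r; split => // i /hP [_ _ ->]; eexists.
rewrite /= eqxx hw; split => //; split => [r' /negbTE -> // | j].
rewrite inE; case: ifP => // _.
by rewrite /decide; case: (Delta _).
Qed.

Lemma blocks_run r st p W (cfg : config N C) :
  (forall m, covered m p -> ready r st W cfg m) ->
  uniq (flatten p) -> all (fun B => B != [::]) p ->
  cmem cfg r = snapshot st W ->
  exists cfg', clos_refl_trans _ (step_any Delta) cfg cfg' /\
    (p != [::] -> clos_trans _ (step_any Delta) cfg cfg') /\
    (forall r', r' != r -> cmem cfg' r' = cmem cfg r') /\
    (forall j, cstatus cfg' j = if (val j < 3) && covered (val j) p then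
       to_status r.+1 (decide j (snapshot st (W ++ flatten
                                    (take (find (fun B => val j \in B) p).+1 p))))
       else cstatus cfg j).
Proof.
elim: p W cfg => [|B p IH] W cfg hrd hu hne hmem.
  exists cfg; split; first exact: rt_refl.
  by split => //; split => // j; rewrite /= andbF.
move: hu hne; rewrite /= cat_uniq => /and3P [_ hdis hup] /andP [hB hne].
have notB m : covered m p -> m \notin B.
  by move=> hm; apply/negP => hmB; move/hasP: hdis; apply; exists m; rewrite -?covered_flatten.
have [cfg1 [hstep1 [hmem1 [hold1 hst1]]]] :=
  block_step hB (fun m hm => hrd m (introT orP (or_introl hm))) hmem.
have hrd1 m : covered m p -> ready r st (W ++ B) cfg1 m.
  move=> hm; have [h3 hW hs] := hrd m (introT orP (or_intror hm)).
  split => //; first by rewrite mem_cat negb_or hW notB.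
  by rewrite hst1 procK // (negbTE (notB _ hm)) andbF.
have [cfg' [hrt [_ [hold hst]]]] := IH (W ++ B) cfg1 hrd1 hup hne hmem1.
exists cfg'; split; last split.
- exact: rt_trans (rt_step _ _ _ _ hstep1) hrt.
- by move=> _; exact: clos_t_rt (t_step _ _ _ _ hstep1) hrt.
split; first by move=> r' hr'; rewrite hold // hold1.
move=> j; rewrite hst hst1 /=; case hj3 : (val j < 3) => //=.
case hjB : (val j \in B) => /=.
  have -> : covered (val j) p = false by apply/negP => /notB; rewrite hjB.
  by rewrite take0 /= cats0.
by case: ifP => // _; rewrite catA.
Qed.

Definition simulates (r : nat) (S : seq nat) (st : nat -> pstate) (cfg : config N C) : Prop :=
  (forall l, l \in S -> cstatus cfg (proc l) = to_status r (st l)) /\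
  (forall r', r <= r' -> forall j, cmem cfg r' j = None).

Lemma round_run r S st cfg p : all (fun l => l < 3) S -> uniq S ->
  simulates r S st cfg -> p \in ord_parts (active S st) ->
  exists cfg', clos_refl_trans _ (step_any Delta) cfg cfg' /\
    (p != [::] -> clos_trans _ (step_any Delta) cfg cfg') /\
    simulates r.+1 S (run_round st p) cfg'.
Proof.
move=> h3 hu [hs hm] hp.
have hin m : covered m p -> m \in S /\ is_active (st m).
  by rewrite (ord_parts_covered _ hp) mem_filter => /andP [].
have hrd m : covered m p -> ready r st [::] cfg m.
  move=> /hin [hmS ha]; split => //; first exact: (allP h3).
  by rewrite hs //; case: (st m) ha.
have hmem : cmem cfg r = snapshot st [::].
  by apply: functional_extensionality => j; rewrite hm // /snapshot andbF.
have hun : uniq (flatten p) by rewrite (perm_uniq (ord_parts_perm hp)) filter_uniq.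
have [cfg' [hrt [ht [hold hst]]]] := blocks_run hrd hun (ord_parts_nonempty hp) hmem.
exists cfg'; split => //; split => //; split.
- move=> l hl; have hl3 : l < 3 := allP h3 l hl.
  rewrite hst procK // hl3 /= /run_round; case: ifP => hlp.
    have [_] := hin l hlp; case: (st l) => // s _.
    congr to_status; congr decide; apply: functional_extensionality => j.
    rewrite /snapshot /snap_view hlp mem_filter mem_procs3 -covered_flatten.
    by case: (val j < 3); rewrite ?andbF ?andbT.
  rewrite hs //; have : l \notin active S st by rewrite -(ord_parts_covered _ hp) hlp.
  by rewrite mem_filter hl andbT; case: (st l).
- move=> r' hr' j; rewrite hold; first by apply: hm; apply: ltnW.
  by rewrite neq_ltn hr' orbT.
Qed.

Hypothesis wait_free_Delta : wait_free Delta.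

(* Wait-freedom: no infinite schedule, i.e. the step relation, read         *)
(* backwards, is well founded on reachable configurations.                   *)
Definition step_back (a b : config N C) : Prop := step_any Delta b a.
Definition steps_back (a b : config N C) : Prop := clos_trans _ (step_any Delta) b a.

(* Otherwise a dependent choice builds an infinite schedule from X. *)
Lemma acc_init X : Acc step_back (init_config X).
Proof.
apply: NNPP => hna.
pose P x := ~ Acc step_back x.
have succ x : P x -> exists yQ : config N C * {set 'I_N}, step Delta x yQ.2 yQ.1 /\ P yQ.1.
  move=> hx; apply: NNPP => hn; apply: hx; constructor => y [Q hQ].
  by apply: NNPP => hy; apply: hn; exists (y, Q).
pose F (x : {x | P x}) : {yQ | step Delta (sval x) yQ.2 yQ.1 /\ P yQ.1} :=
  constructive_indefinite_description _ (succ _ (svalP x)).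
pose g (x : {x | P x}) : {x | P x} := exist _ (sval (F x)).1 (proj2 (svalP (F x))).
pose x0 : {x | P x} := exist _ (init_config X) hna.
apply: (wait_free_Delta (x := X)).
exists (fun k => sval (iter k g x0)), (fun k => (sval (F (iter k g x0))).2).
by split => // k; rewrite iterS; exact: (proj1 (svalP (F _))).
Qed.

Lemma acc_reachable X cfg : reachable Delta X cfg -> Acc steps_back cfg.
Proof.
move=> h; have hacc : Acc step_back cfg.
  move: (acc_init X); elim: h => [a b hab | a | a b d _ IH1 _ IH2] ha.
  - by apply: (Acc_inv ha); exact: hab.
  - exact: ha.
  - exact: IH2 (IH1 ha).
elim: (Acc_clos_trans _ _ _ hacc) => y _ IH; constructor => z hz; apply: IH.
elim: hz => [x w hxw | x w v _ h1 _ h2]; first exact: t_step.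
exact: t_trans h2 h1.
Qed.

Lemma LeafParity_exists w S : all (fun l => l < 3) S -> uniq S ->
  forall cfg, Acc steps_back cfg ->
  forall r st, simulates r S st cfg -> exists b, LeafParity w S st b.
Proof.
move=> h3 hu cfg ha; elim: ha => {}cfg _ IH r st hsim.
case: (active S st =P [::]) => hA; first by eexists; apply: PLeaf.
have : forall p, p \in ord_parts (active S st) -> exists b, LeafParity w S (run_round st p) b.
  move=> p hp; have [cfg' [_ [ht hsim']]] := round_run h3 hu hsim hp.
  apply: (IH cfg' _ r.+1 _ hsim'); apply: ht; apply/eqP => hp0.
  move: hA; case: (active S st) hp => // l A' hp _.
  by move: (ord_parts_covered l hp); rewrite hp0 inE eqxx.
case/list_choice => f hf; exists (xorl (map f (ord_parts (active S st)))).
by apply: PNode => //; apply/eqP.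
Qed.

Definition Realizable (X : 'I_N -> 'I_C) (S : seq nat) (st : nat -> pstate) : Prop :=
  exists r cfg, reachable Delta X cfg /\ simulates r S st cfg.

Lemma realizable_parity w X S st : ordered3 S ->
  Realizable X S st -> LeafParity w S st (parity w S st).
Proof.
move=> hS [r [cfg [hr hsim]]]; have h3 := ordered3_all hS; have hu := ordered3_uniq hS.
have [b hb] := LeafParity_exists w h3 hu (acc_reachable hr) hsim.
by rewrite (parityE hb).
Qed.

Lemma realizable_round X S st p : ordered3 S ->
  Realizable X S st -> p \in ord_parts (active S st) -> Realizable X S (run_round st p).
Proof.
move=> hS [r [cfg [hr hsim]]] hp.
have [cfg' [hrt [_ hsim']]] := round_run (ordered3_all hS) (ordered3_uniq hS) hsim hp.
by exists r.+1, cfg'; split => //; exact: rt_trans hr hrt.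
Qed.

Lemma realizable_sub X S F st : {subset F <= S} -> Realizable X S st -> Realizable X F st.
Proof.
move=> hFS [r [cfg [hr [hs hm]]]]; exists r, cfg; split => //; split => // l hl.
exact: hs (hFS _ hl).
Qed.

Lemma parity_node w X S st : ordered3 S -> Realizable X S st -> active S st != [::] ->
  parity w S st = xorl [seq parity w S (run_round st p) | p <- ord_parts (active S st)].
Proof.
move=> hS hg hA; apply: parityE; apply: PNode => // p hp.
exact: realizable_parity hS (realizable_round hS hg hp).
Qed.

Definition views_state (st : nat -> pstate) (F : seq nat) (kk : seq (seq nat)) (l : nat)
    : pstate :=
  if (l \in F) && is_active (st l)
  then decide (proc l) (snapshot st (nth [::] kk (index l F))) else st l.

Lemma run_round_views st T F p l : {subset F <= T} ->
  p \in ord_parts (active T st) -> l \in F ->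
  run_round st p l = views_state st F (face_views F p) l.
Proof.
move=> hFT hp hl; rewrite /run_round /views_state (ord_parts_covered _ hp) mem_filter.
rewrite hl hFT //= /face_views (nth_map 0) ?index_mem // nth_index //.
by case: (st l).
Qed.

Lemma face_parity X w S k st : ordered3 S -> k \in S -> Realizable X S st ->
  xorl [seq parity w (drop_proc k S) (run_round st p) | p <- ord_parts (active S st)] =
  parity w (drop_proc k S) st.
Proof.
move=> hS hk hg; set F := drop_proc k S.
have hFS : {subset F <= S} by move=> l; rewrite mem_filter => /andP [].
pose G kk := parity w F (views_state st F kk).
have hG T : {subset F <= T} -> {in ord_parts (active T st),
    (fun p => parity w F (run_round st p)) =1 (fun p => G (face_views F p))}.
  by move=> hFT p hp; apply: parity_ext => l hl; exact: run_round_views hFT hp hl.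
rewrite (iffLR (eq_in_map _ _ _) (hG _ hFS)).
have -> : xorl [seq G (face_views F p) | p <- ord_parts (active S st)] =
          xorl [seq G (face_views F p) | p <- ord_parts (active F st)].
  have hAF : [seq l <- active S st | l \in F] = active F st.
    rewrite /active /F /drop_proc filterC -!filter_predI; apply: eq_in_filter => l hl /=.
    by rewrite mem_filter hl andbT.
  have hcA : ordered3 (active S st) := ordered3_filter _ hS.
  have hcF : ordered3 F := ordered3_filter _ hS.
  rewrite -hAF face_views_mod2 //.
  rewrite (@eq_in_count _ _ (pred1 k)); last first.
    by move=> l; rewrite mem_filter => /andP [_ hlS]; rewrite /F mem_filter hlS andbT negbK.
  by rewrite count_uniq_mem ?leq_b1 // filter_uniq // ordered3_uniq.
case: (active F st =P [::]) => hAF0.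
  rewrite hAF0 /= addbF /G; apply: parity_ext => l hl.
  have : l \notin active F st by rewrite hAF0.
  by rewrite /views_state hl mem_filter hl andbT => /negbTE ->.
rewrite (parity_node _ (ordered3_filter _ hS) (realizable_sub hFS hg)); last exact/eqP.
by congr xorl; apply/esym/eq_in_map; apply: hG.
Qed.

Lemma sperner_parity X wS (wF : nat -> seq 'I_C -> bool) S st b : ordered3 S ->
  (forall st', Realizable X S st' -> active S st' = [::] ->
     wS (outputs S st') = xorl [seq wF k (outputs (drop_proc k S) st') | k <- S]) ->
  Realizable X S st -> LeafParity wS S st b ->
  b = xorl [seq parity (wF k) (drop_proc k S) st | k <- S].
Proof.
move=> hS hleaf hg h; elim: h hg => [s0 h0 | s0 f hne hch IH] hg.
  rewrite hleaf //; congr xorl; apply/eq_in_map => k hk; symmetry.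
  by apply: parityE; apply: PLeaf; rewrite /active /drop_proc filterC -/(active S s0) h0.
have -> : map f (ord_parts (active S s0)) = [seq xorl [seq parity (wF k) (drop_proc k S)
    (run_round s0 p) | k <- S] | p <- ord_parts (active S s0)].
  by apply/eq_in_map => p hp; exact: IH p hp (realizable_round hS hg hp).
rewrite xorl_swap; congr xorl; apply/eq_in_map => k hk.
exact: face_parity hS hk hg.
Qed.

Lemma parity_zero X w S st b :
  (forall st', Realizable X S st' -> active S st' = [::] -> w (outputs S st') = false) ->
  ordered3 S -> Realizable X S st -> LeafParity w S st b -> b = false.
Proof.
move=> hleaf hS hg h; elim: h hg => [s0 h0 | s0 f hne hch IH] hg; first exact: hleaf.
rewrite (iffLR (eq_in_map _ (fun _ => false) _)) ?xorl_false // => p hp.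
exact: IH p hp (realizable_round hS hg hp).
Qed.

(* A single process runs alone: the tree is a path and its parity is the     *)
(* weight of its unique leaf.                                                *)
Lemma parity_solo X w l st b beta : l < 3 ->
  (forall st', Realizable X [:: l] st' -> active [:: l] st' = [::] ->
     w (outputs [:: l] st') = beta) ->
  Realizable X [:: l] st -> LeafParity w [:: l] st b -> b = beta.
Proof.
move=> hl hleaf hg h.
have hS : ordered3 [:: l] by case: l {hleaf hg h} hl => [|[|[|]]].
elim: h hg => [s0 h0 | s0 f hne hch IH] hg; first exact: hleaf.
have hA : active [:: l] s0 = [:: l].
  by move: hne; rewrite /active /=; case: (is_active (s0 l)).
have hp : [:: [:: l]] \in ord_parts (active [:: l] s0) by rewrite hA inE.
rewrite hA /= addbF; apply: (IH _ hp).
exact: realizable_round hS hg hp.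
Qed.

Hypothesis solves : solves_cycle_agreement Delta.
Hypothesis c_ge3 : 3 <= c.

Lemma leaf_config X S st : Realizable X S st -> active S st = [::] ->
  exists cfg, reachable Delta X cfg /\
    forall l, l \in S -> cstatus cfg (proc l) = Done N (output_of (st l)).
Proof.
move=> [r [cfg [hr [hs _]]]] hA; exists cfg; split => // l hl.
have : l \notin active S st by rewrite hA.
by rewrite hs // mem_filter hl andbT; case: (st l).
Qed.

Lemma leaf_agreement X S st l m : Realizable X S st -> active S st = [::] ->
  l \in S -> m \in S ->
  (output_of (st l) == output_of (st m)) || cycle_adj (output_of (st l)) (output_of (st m)).
Proof.
move=> hg hA hl hm; have [cfg [hr hs]] := leaf_config hg hA.
exact: (solves hr).1 _ _ _ _ (hs l hl) (hs m hm).
Qed.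

Lemma leaf_validity X S st l (u v : 'I_C) :
  (forall p, X p \in [:: u; v]) -> (u == v) || cycle_adj u v ->
  Realizable X S st -> active S st = [::] -> l \in S -> output_of (st l) \in [:: u; v].
Proof.
move=> hX huv hg hA hl; have [cfg [hr hs]] := leaf_config hg hA.
have [p [q]] := (solves hr).2 _ _ (hs l hl).
have hedge (a b : 'I_C) : a \in [:: u; v] -> b \in [:: u; v] ->
    on_shortest_path a b (output_of (st l)) -> output_of (st l) \in [:: u; v].
  move=> ha hb; case: (eqVneq a b) => [<- /on_shortest_path_same -> // | hab hy].
  have hadj : cycle_adj a b.
    move: huv ha hb hab; rewrite !inE => /orP [/eqP <- | huv];
      by case/orP=> /eqP -> /orP [] /eqP ->; rewrite ?eqxx // cycle_adjC.
  by case: (on_shortest_path_adj hadj hy) => ->.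
exact: hedge (hX p) (hX q).
Qed.

Definition init_state (X : 'I_N -> 'I_C) (l : nat) : pstate :=
  AAct (SInit (proc l) (X (proc l))).

Lemma realizable_init X S : Realizable X S (init_state X).
Proof. by exists 1, (init_config X); split; [exact: rt_refl | split]. Qed.

(* A solo process with input v outputs v, so its parity is w [:: v]. *)
Lemma parity_solo_input w X l (v : 'I_C) : l < 3 -> X (proc l) = v ->
  parity w [:: l] (init_state X) = w [:: v].
Proof.
move=> hl hXl; pose Xv (_ : 'I_N) := v.
rewrite (@parity_ext _ _ _ (init_state Xv)); last by move=> m /[!inE] /eqP ->; rewrite /init_state hXl.
have hS : ordered3 [:: l] by case: l hl {hXl} => [|[|[|]]].
have hg := realizable_init Xv [:: l].
apply: parity_solo hl _ hg (realizable_parity _ hS hg) => st' hg' hA.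
have := leaf_validity (u := v) (v := v) _ _ hg' hA (mem_head l [::]).
by rewrite /outputs /= !inE orbb eqxx => /(_ (fun _ => mem_head _ _) isT) /eqP ->.
Qed.

Definition w_edge01 (ys : seq 'I_C) : bool := if ys is [:: a; b] then edge01 a b else false.
Definition w_vertex1 (ys : seq 'I_C) : bool := if ys is [:: a] then val a == 1 else false.
Definition w_none (ys : seq 'I_C) : bool := false.

Definition spoke_proc (j : nat) : nat := if odd j then 1 else 2.

Definition spoke_input (j : nat) (p : 'I_N) : 'I_C :=
  if val p == spoke_proc j then cyc j else cyc 0.

Definition spoke (j : nat) : bool :=
  parity w_edge01 [:: 0; spoke_proc j] (init_state (spoke_input j)).

Definition tri_input (j : nat) (p : 'I_N) : 'I_C :=
  if val p == spoke_proc j.+1 then cyc j.+1 else spoke_input j p.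
Definition rim_input (j : nat) (p : 'I_N) : 'I_C :=
  if val p == spoke_proc j.+1 then cyc j.+1 else cyc j.

Lemma spoke_proc_lt3 j : spoke_proc j < 3.
Proof. by rewrite /spoke_proc; case: (odd j). Qed.

(* Validity on the rim j -- j+1 excludes output edges {0,1}. *)
Lemma rim_zero j : 0 < j < C ->
  parity w_edge01 [:: 1; 2] (init_state (tri_input j)) = false.
Proof.
move=> hj; rewrite (@parity_ext _ _ _ (init_state (rim_input j))); last first.
  move=> l /[!inE] /orP [] /eqP ->;
  by rewrite /init_state /tri_input /rim_input /spoke_input !procK // /spoke_proc /=;
     case: (odd j).
have hS : ordered3 [:: 1; 2] by [].
have hg := realizable_init (rim_input j) [:: 1; 2].
apply: (parity_zero _ hS hg (realizable_parity _ hS hg)) => st' hg' hA.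
have hX p : rim_input j p \in [:: cyc j; cyc j.+1].
  by rewrite /rim_input !inE; case: ifP; rewrite eqxx ?orbT.
have hv l : l \in [:: 1; 2] -> output_of (st' l) \in [:: cyc j; cyc j.+1].
  by move=> hl; apply: leaf_validity hX _ hg' hA hl; rewrite cyc_adj orbT.
by apply: (rim_not_edge01 (j := j)) => //; apply: hv.
Qed.

Lemma ordered3_spoke j : ordered3 [:: 0; spoke_proc j].
Proof. by rewrite /spoke_proc; case: (odd j). Qed.

Lemma spoke_in_triangle j k : k \in [:: j; j.+1] ->
  spoke k = parity w_edge01 [:: 0; spoke_proc k] (init_state (tri_input j)).
Proof.
move=> hk; apply: parity_ext => l /[!inE] /orP [] /eqP ->;
  rewrite /init_state /tri_input /spoke_input !procK ?spoke_proc_lt3 //;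
  by move: hk; rewrite !inE => /orP [] /eqP ->; rewrite /spoke_proc /=; case: (odd j).
Qed.

(* Sperner on the triangle 0, j, j+1: no output triangle has an odd number   *)
(* of {0,1} edges and the rim has none, so consecutive spokes agree.         *)
Lemma spoke_step j : 0 < j < C -> spoke j = spoke j.+1.
Proof.
move=> hj; set X := tri_input j.
have hS : ordered3 procs3 by [].
have hg := realizable_init X procs3.
have hleaf st' : Realizable X procs3 st' -> active procs3 st' = [::] ->
    w_none (outputs procs3 st') =
    xorl [seq w_edge01 (outputs (drop_proc k procs3) st') | k <- procs3].
  move=> hg' hA; symmetry.
  by apply: triangle_edge01_even; [lia | apply: (leaf_agreement hg' hA) ..].
have := sperner_parity (wF := fun _ => w_edge01) hS hleaf hg (realizable_parity _ hS hg).
rewrite (parity_zero _ hS hg (realizable_parity _ hS hg)) // /= rim_zero //.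
rewrite (spoke_in_triangle (mem_head j [:: j.+1])).
rewrite (spoke_in_triangle (_ : j.+1 \in [:: j; j.+1])) ?inE ?eqxx ?orbT //.
rewrite /spoke_proc /=; case: (odd j) => /=;
  by case: (parity _ [:: 0; 1] _); case: (parity _ [:: 0; 2] _).
Qed.

(* The last spoke has both inputs 0, hence no output edge {0,1}. *)
Lemma spoke_last : spoke C = false.
Proof.
have h0 : cyc C = cyc 0 :> 'I_C by apply: val_inj; rewrite !cycK modnn mod0n.
have hS := ordered3_spoke C.
have hg := realizable_init (spoke_input C) [:: 0; spoke_proc C].
apply: (parity_zero _ hS hg (realizable_parity _ hS hg)) => st' hg' hA.
have hX p : spoke_input C p \in [:: cyc 0; cyc 0].
  by rewrite /spoke_input h0; case: ifP; rewrite inE eqxx.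
have hv l : l \in [:: 0; spoke_proc C] -> val (output_of (st' l)) = 0.
  move=> hl; have := leaf_validity hX (introT orP (or_introl (eqxx _))) hg' hA hl.
  by rewrite !inE orbb => /eqP ->; rewrite cycK mod0n.
by rewrite /w_edge01 /outputs /= /edge01 !hv ?inE ?eqxx ?orbT.
Qed.

(* The first spoke is an input edge {0,1}: by Sperner in dimension one its   *)
(* parity is that of its endpoints' outputs, namely 1 and 0.                 *)
Lemma spoke_first : spoke 1 = true.
Proof.
set X := spoke_input 1.
have hS : ordered3 [:: 0; 1] by [].
have hg := realizable_init X [:: 0; 1].
have h0 : val (cyc 0 : 'I_C) = 0 by rewrite cycK mod0n.
have h1 : val (cyc 1 : 'I_C) = 1 by rewrite cycK modn_small //; lia.
have hleaf st' : Realizable X [:: 0; 1] st' -> active [:: 0; 1] st' = [::] ->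
    w_edge01 (outputs [:: 0; 1] st') =
    xorl [seq w_vertex1 (outputs (drop_proc k [:: 0; 1]) st') | k <- [:: 0; 1]].
  move=> hg' hA.
  have hX p : X p \in [:: cyc 0; cyc 1] by rewrite /X /spoke_input; case: ifP; rewrite !inE eqxx ?orbT.
  have hv l : l \in [:: 0; 1] -> output_of (st' l) \in [:: cyc 0; cyc 1].
    by move=> hl; apply: leaf_validity hX _ hg' hA hl; rewrite cyc_adj orbT.
  move: (hv 0 (mem_head _ _)) (hv 1 (mem_last _ [:: 1])); rewrite /= !inE.
  by case/orP=> /eqP ->; case/orP=> /eqP ->; rewrite /edge01 ?h0 ?h1.
rewrite /spoke /= -/X.
rewrite (sperner_parity (wF := fun _ => w_vertex1) hS hleaf hg (realizable_parity _ hS hg)) /=.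
rewrite (@parity_solo_input _ _ 1 (cyc 1)) ?(@parity_solo_input _ _ 0 (cyc 0)) //.
- by rewrite /= h0 h1.
- by rewrite /X /spoke_input procK.
- by rewrite /X /spoke_input procK.
Qed.

(* The spokes are all equal, yet the first is 1 and the last is 0. *)
Lemma no_protocol : False.
Proof.
have hall j : 0 < j <= C -> spoke j = spoke 1.
  elim: j => [|[|j] IH] // /andP [_ hj].
  by rewrite -(@spoke_step j.+1) ?IH //; lia.
by move: (hall C); rewrite spoke_last spoke_first; lia.
Qed.

End ThreeProcesses.

Theorem mainTheorem1 (c n : nat) (hc : 4 <= c) (hn : 3 <= n) :
  ~ exists Delta : algorithm n c,
      wait_free Delta /\ solves_cycle_agreement Delta.
Proof.
case: n hn => [|[|[|n]]] // _; case: c hc => [|[|[|[|c]]]] // _.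
move=> [Delta [hwf hsol]].
exact: (@no_protocol n c.+3 Delta hwf hsol).
Qed.
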